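(* Let $k\ge 2$ and let $\mathrm{R}_{2k}=\{a_0,a_1,\dots,a_{2k-1}\}$ be the dihedral quandle of order $2k$, i.e. the set $\mathbb{Z}_{2k}$ with operation $a_i\cdot a_j=a_{(2j-i)\bmod 2k}$. In the integral quandle ring $\mathbb{Z}[\mathrm{R}_{2k}]$, let $e_i=a_i-a_0$ for $i=1,\dots,2k-1$. Then $e_i\cdot e_k=0$ for all $i=1,2,\dots,2k-1$.
   Context: The quandle ring $\mathbb{Z}[A]$ of a quandle $A$ is the free abelian group on $A$ with multiplication given by the bilinear extension of the quandle operation: $\left(\sum_i r_i a_i\right)\cdot\left(\sum_j s_j a_j\right)=\sum_{i,j} r_i s_j (a_i\cdot a_j)$. *)

From mathcomp Require Import all_boot all_order all_algebra.
Set Implicit Arguments. Unset Strict Implicit. Unset Printing Implicit Defensive.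
Import GRing.Theory.
Local Open Scope ring_scope.

(* Dihedral quandle R_m on Z_m = 'I_m with m = n.+1 : a_i . a_j = a_{(2j - i) mod n}.
   Computed as (2j + (m - i)) mod m in nat, which equals (2j - i) mod m. *)
Definition dihedral_op (n : nat) (i j : 'I_n.+1) : 'I_n.+1 :=
  inord ((2 * j + (n.+1 - i)) %% n.+1)%N.

(* Quandle ring Z[A] of a finite quandle (A, op): the free abelian group on A,
   represented as integer-valued functions on A (coefficient of each basis element). *)
Definition qring (A : finType) := {ffun A -> int}.

Definition qbasis (A : finType) (a : A) : qring A := [ffun x => (x == a)%:R].

Definition qmul (A : finType) (op : A -> A -> A) (x y : qring A) : qring A :=
  [ffun c => \sum_(a : A) \sum_(b : A) if op a b == c then x a * y b else 0].

Definition dih_e (n : nat) (i : 'I_n.+1) : qring 'I_n.+1 :=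
  qbasis i - qbasis (ord0 : 'I_n.+1).

(* In the dihedral quandle of order 2k we have a_j . a_k = a_(2k - j) = a_(-j) = a_j . a_0,
   so right multiplication by a_k and by a_0 coincide; by bilinearity x . (a_k - a_0) = 0
   for every x in the quandle ring, in particular for x = e_i. *)

From mathcomp Require Import all_boot all_order all_algebra.
Local Open Scope ring_scope.
Import GRing.Theory.

Lemma qmulBr (A : finType) (op : A -> A -> A) (x y z : qring A) :
  qmul op z (x - y) = qmul op z x - qmul op z y.
Proof.
apply/ffunP => c; rewrite !ffunE -sumrB; apply: eq_bigr => a _.
rewrite -sumrB; apply: eq_bigr => b _; rewrite !ffunE.
by case: ifP; rewrite ?subr0 // mulrBr.
Qed.

Lemma qmul_qbasisr (A : finType) (op : A -> A -> A) (x : qring A) (b : A) :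
  qmul op x (qbasis b) = [ffun c => \sum_(a : A) if op a b == c then x a else 0].
Proof.
apply/ffunP => c; rewrite !ffunE; apply: eq_bigr => a _.
rewrite (bigD1 b) //= ffunE eqxx mulr1 big1 ?addr0 // => b' nb'.
by rewrite ffunE (negbTE nb') mulr0; case: ifP.
Qed.

Lemma qmul_qbasisr_eq (A : finType) (op : A -> A -> A) (x : qring A) (b b' : A) :
  (forall a, op a b = op a b') -> qmul op x (qbasis b) = qmul op x (qbasis b').
Proof.
by move=> eq_op; rewrite !qmul_qbasisr; apply/ffunP => c; rewrite !ffunE;
  under eq_bigr => a _ do rewrite eq_op.
Qed.

Lemma dihedral_op_half_order (n k : nat) (i : 'I_n.+1) :
  k.*2 = n.+1 -> dihedral_op i (inord k) = dihedral_op i ord0.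
Proof.
move=> k2; have k_gt0 : (0 < k)%N by rewrite -double_gt0 k2.
have k_lt : (k < n.+1)%N by rewrite -k2 -addnn -{1}[k]addn0 ltn_add2l.
by rewrite /dihedral_op (inordK k_lt) muln0 add0n -modnDml mul2n k2 modnn add0n.
Qed.

(* The carrier 'I_(k.*2.-1.+1) is Z_(2k). *)
Theorem lemma2p2 (k : nat) (hk : (2 <= k)%N) (i : 'I_(k.*2.-1.+1)) :
  (0 < i)%N ->
  qmul (@dihedral_op _) (dih_e i) (dih_e (inord k)) = 0.
Proof.
move=> _; rewrite /dih_e qmulBr; apply/eqP; rewrite subr_eq0; apply/eqP.
apply: qmul_qbasisr_eq => a; apply: dihedral_op_half_order.
by rewrite prednK // double_gt0 (leq_trans _ hk).
Qed.
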